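(* There is a constant $C>0$ such that the following holds. Let $p$ be any prime and let $A$, $B$ be any $p$-groups with $|A|=p^a$, $|B|=p^b$, $a,b\ge 1$. Let $p^d$ be the maximum order of an element of $A$; for $m\ge1$ let $s_m$ be the number of elements $g\in A$ with $g^m=1$; for a divisor $n$ of $|B|$ let $d_n$ be the number of elements of $B$ of order $n$; and for $0\le n\le b$ let $k_n=\frac{p^{-n}d_{p^{b-n}}}{a(B)}$. Then $$\left|\,a(A\wr B)-\left(p^d a(B)-(p-1)a(B)\sum_{n=0}^{b}k_n\, p^{d-1}\left(\frac{s_{p^{d-1}}}{p^a}\right)^{p^n}\right)\right|\le C\,p^{d-1}a(B).$$
   Context: For a finite group $G$, the average order is $a(G)=\frac{1}{|G|}\sum_{g\in G}\mathrm{order}(g)$. For groups $A,B$, let $K=\prod_{b\in B}A$, on which $B$ acts by $x\cdot(\alpha_b)_b=(\alpha_{x^{-1}b})_b$ for $x\in B$; the wreath product $A\wr B$ is the semidirect product $K\rtimes B$ for this action. *)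

From HB Require Import structures.
From mathcomp Require Import all_boot all_order all_algebra all_fingroup.
From mathcomp Require Import all_classical all_reals.

Set Implicit Arguments.
Unset Strict Implicit.
Unset Printing Implicit Defensive.

Import GRing.Theory Num.Theory.

(* The (unrestricted) wreath product gT wr hT, carrier {ffun hT -> gT} * hT,
   with multiplication (f,x)(g,y) = (f * (x . g), x y) where
   (x . g)(b) = g (x^-1 b), i.e. K ⋊ B for the action x.(a_b)_b = (a_{x^-1 b})_b. *)
Section Wreath.
Variables (gT hT : finGroupType).

Definition wreath_type : Type := ({ffun hT -> gT} * hT)%type.
HB.instance Definition _ := Finite.on wreath_type.

Local Open Scope group_scope.

Definition wr_act (x : hT) (g : {ffun hT -> gT}) : {ffun hT -> gT} :=
  [ffun b => g (x^-1 * b)].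

Definition wr_mul (u v : wreath_type) : wreath_type :=
  ([ffun b => u.1 b * wr_act u.2 v.1 b], u.2 * v.2).
Definition wr_one : wreath_type := ([ffun => 1], 1).
Definition wr_inv (u : wreath_type) : wreath_type :=
  ([ffun b => (u.1 (u.2 * b))^-1], u.2^-1).

Lemma wr_mulA : associative wr_mul.
Proof.
move=> [f x] [g y] [h z]; rewrite /wr_mul /wr_act /=; congr (_, _); last first.
  by rewrite mulgA.
by apply/ffunP => b; rewrite !ffunE /= invMg; rewrite !mulgA.
Qed.

Lemma wr_mul1 : left_id wr_one wr_mul.
Proof.
move=> [f x]; rewrite /wr_mul /wr_act /wr_one /=; congr (_, _); last first.
  by rewrite mul1g.
by apply/ffunP => b; rewrite !ffunE invg1 !mul1g.
Qed.

Lemma wr_mulV : left_inverse wr_one wr_inv wr_mul.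
Proof.
move=> [f x]; rewrite /wr_mul /wr_act /wr_one /wr_inv /=; congr (_, _); last first.
  by rewrite mulVg.
by apply/ffunP => b; rewrite !ffunE /= invgK mulVg.
Qed.

HB.instance Definition _ :=
  Finite_isGroup.Build wreath_type wr_mulA wr_mul1 wr_mulV.

End Wreath.

Section WreathSet.
Variables (gT hT : finGroupType).
Definition wreath (A : {set gT}) (B : {set hT}) : {set wreath_type gT hT} :=
  [set u : wreath_type gT hT |
     [forall b, if b \in B then u.1 b \in A else u.1 b == 1%g] && (u.2 \in B)].
End WreathSet.

Definition avg_order (R : numFieldType) (gT : finGroupType) (G : {set gT}) : R :=
  (\sum_(g in G) (#[g]%g)%:R) / (#|G|)%:R.

Definition s_count (gT : finGroupType) (A : {set gT}) (m : nat) : nat :=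
  #|[set g in A | (g ^+ m == 1)%g]|.

Definition d_count (gT : finGroupType) (B : {set gT}) (n : nat) : nat :=
  #|[set g in B | #[g]%g == n]|.

From HB Require Import structures.
From mathcomp Require Import all_classical all_reals.
From mathcomp Require Import all_boot all_order all_algebra all_fingroup all_solvable.
From mathcomp Require Import zify ring lra.

(* Write u = (f, x) in A wr B.  Then u ^+ #[x] = (g, 1), where g b is the product of f along
   the <[x]>-orbit of b, so #[u] = #[x] * #[(g, 1)].  As A has exponent p ^ d, #[(g, 1)] is
   p ^ d unless g ^+ p ^ (d - 1) = 1, in which case it lies in [1, p ^ (d - 1)]; so up to an
   error of #[x] * p ^ (d - 1), #[u] depends only on whether g ^+ p ^ (d - 1) = 1.  The values
   of g along one coset of <[x]> are conjugate, and overwriting f by g on a transversal of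
   these cosets is a bijection of the base group, so exactly s ^ r * |A| ^ (|B| - r) of the f
   satisfy g ^+ p ^ (d - 1) = 1, where s = s_(p ^ (d - 1)) and r = |B : <[x]>|.  Averaging over
   u and grouping the x in B by their order gives the main term, with total error at most
   p ^ (d - 1) * a(B). *)

Set Implicit Arguments.
Unset Strict Implicit.
Unset Printing Implicit Defensive.

Import Order.TTheory GRing.Theory Num.Theory.

Lemma sumr_nat_of_bool (R : pzSemiRingType) (T : finType) (D : {set T}) (P : pred T) :
  (\sum_(i in D) (P i : nat)%:R = #|[set i in D | P i]|%:R :> R)%R.
Proof.
rewrite -sumr_const big_mkcond [RHS]big_mkcond /=.
by apply: eq_bigr => i _; rewrite !inE; case: (i \in D); case: (P i).
Qed.

Lemma order_pexpS (gT : finGroupType) (z : gT) p e : prime p ->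
  (z ^+ (p ^ e.+1) = 1)%g -> (z ^+ (p ^ e) != 1)%g -> #[z]%g = p ^ e.+1.
Proof.
move=> p_pr ze1 ze.
have : (#[z]%g %| p ^ e.+1) by rewrite order_dvdn ze1.
case/(dvdn_pfactor _ _ p_pr) => k; rewrite leq_eqVlt => /orP[/eqP -> //| ke] zk.
by case/negP: ze; rewrite -order_dvdn zk dvdn_exp2l.
Qed.

Lemma order_pexpS_approx (R : realFieldType) (gT : finGroupType) (z : gT) p e :
  prime p -> (z ^+ (p ^ e.+1) = 1)%g ->
  (`|#[z]%g%:R - ((p ^ e.+1)%:R - (p%:R - 1) * (p ^ e)%:R * (z ^+ (p ^ e) == 1)%g%:R)|
     <= (p ^ e)%:R :> R)%R.
Proof.
move=> p_pr ze1; have [ze|ze] := eqVneq (z ^+ (p ^ e))%g 1%g; last first.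
  by rewrite (order_pexpS p_pr ze1 ze) mulr0 subr0 subrr normr0.
have le_z : (#[z]%g <= p ^ e) by rewrite dvdn_leq ?expn_gt0 ?prime_gt0 ?order_dvdn ?ze.
rewrite -(ler_nat R) in le_z; have := ler0n R #[z]%g.
rewrite expnS natrM mulr1 ler_norml => z0; apply/andP; split; nra.
Qed.

Section WreathProduct.
Variables (gT hT : finGroupType).
Local Notation W := (wreath_type gT hT).
Local Open Scope group_scope.

Definition wr_base_pow (f : {ffun hT -> gT}) (x : hT) (k : nat) : {ffun hT -> gT} :=
  [ffun b => \prod_(i < k) f ((x ^+ i)^-1 * b)].

Lemma wr_expg (f : {ffun hT -> gT}) (x : hT) k :
  ((f, x) : W) ^+ k = (wr_base_pow f x k, x ^+ k).
Proof.
elim: k => [|k IHk]; first by congr (_, _); apply/ffunP => b; rewrite !ffunE big_ord0.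
rewrite expgSr IHk; congr (_, _); last by rewrite expgSr.
by apply/ffunP => b; rewrite !ffunE big_ord_recr.
Qed.

Lemma wr_base_pow1 (g : {ffun hT -> gT}) k : wr_base_pow g 1 k = [ffun b => g b ^+ k].
Proof.
apply/ffunP => b; rewrite !ffunE; elim: k => [|k IHk]; first by rewrite big_ord0.
by rewrite big_ord_recr IHk /= expg1n invg1 mul1g expgSr.
Qed.

Lemma wr_expg1_eq1 (g : {ffun hT -> gT}) n :
  (((g, 1) : W) ^+ n == 1) = [forall b, g b ^+ n == 1].
Proof.
rewrite wr_expg wr_base_pow1 expg1n; apply/eqP/forallP => [/(congr1 fst)/ffunP gn1 b|gn1].
  by have := gn1 b; rewrite !ffunE => ->.
by congr (_, _); apply/ffunP => b; rewrite !ffunE; apply/eqP.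
Qed.

Lemma order_wr (f : {ffun hT -> gT}) (x : hT) :
  #[(f, x) : W] = (#[x] * #[(wr_base_pow f x #[x], 1%g) : W])%N.
Proof.
set u : W := (f, x).
have -> : ((wr_base_pow f x #[x], 1) : W) = u ^+ #[x] by rewrite wr_expg expg_order.
have x_dvd : #[x] %| #[u] by have := expg_order u; rewrite wr_expg order_dvdn => -[_ ->].
by rewrite orderXgcd (gcdn_idPr x_dvd) mulnC divnK.
Qed.

Variables (A : {group gT}) (B : {group hT}).

Definition wr_base : {set {ffun hT -> gT}} :=
  [set f : {ffun hT -> gT} | [forall b, if b \in B then f b \in A else f b == 1]].

Lemma wreathE : wreath A B = setX wr_base B.
Proof. by apply/setP => -[f x]; rewrite !inE. Qed.

Lemma card_wreath : #|wreath A B| = (#|wr_base| * #|B|)%N.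
Proof. by rewrite wreathE cardsX. Qed.

Lemma sum_wreath (R : nmodType) (F : W -> R) :
  (\sum_(u in wreath A B) F u = \sum_(x in B) \sum_(f in wr_base) F (f, x))%R.
Proof.
rewrite wreathE exchange_big pair_big /=.
by apply: eq_big => -[f x] //=; rewrite inE.
Qed.

Lemma wr_base_pow_out f x b k : f \in wr_base -> x \in B -> b \notin B ->
  wr_base_pow f x k b = 1.
Proof.
move=> + xB bB; rewrite inE => /forallP fK; rewrite ffunE big1 // => i _.
have := fK ((x ^+ i)^-1 * b); rewrite groupMl ?groupV ?groupX // (negbTE bB).
by move/eqP.
Qed.

Lemma wr_base_pow_in f x b k : f \in wr_base -> x \in B -> b \in B ->
  wr_base_pow f x k b \in A.
Proof.
move=> + xB bB; rewrite inE => /forallP fK; rewrite ffunE; apply: group_prod => i _.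
by have := fK ((x ^+ i)^-1 * b); rewrite groupMl ?groupV ?groupX // bB.
Qed.

(* The orbit products at b and at x * b are cyclic rotations of each other. *)
Lemma wr_base_pow_mull f x c :
  wr_base_pow f x #[x] (x * c) = wr_base_pow f x #[x] c ^ (f (x * c))^-1.
Proof.
rewrite !ffunE; have := order_gt0 x; case: #[x] (expg_order x) => [//|m] xm _.
rewrite big_ord_recl big_ord_recr /= expg0 invg1 mul1g.
have -> : (x ^+ m)^-1 * c = x * c.
  by congr (_ * _); apply/eqP; rewrite eq_invg_mul -expgSr xm.
rewrite conjgE invgK mulgK; congr (_ * _).
by apply: eq_bigr => i _; rewrite /bump /= add1n expgS invMg -mulgA mulKg.
Qed.

Lemma card_wr_base_on (T : {set hT}) (S : {set gT}) : T \subset B -> S \subset A ->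
  #|[set f in wr_base | [forall t in T, f t \in S]]| =
  (#|S| ^ #|T| * #|A| ^ (#|B| - #|T|))%N.
Proof.
move=> TB SA.
pose F b := if b \in T then S else if b \in B then A : {set gT} else [set 1].
have -> : [set f in wr_base | [forall t in T, f t \in S]] = [set f | f \in family F].
  apply/setP => f; rewrite !inE; apply/andP/familyP => [[/forallP fK /forall_inP fT] b|fF].
    rewrite /F; case: ifP => bT; first exact: fT.
    by have := fK b; case: (b \in B) => // /eqP ->; rewrite inE.
  split; last by apply/forall_inP => t tT; have := fF t; rewrite /F tT.
  apply/forallP => b; have := fF b; rewrite /F; case: ifP => bT.
    by rewrite (subsetP TB b bT) => /(subsetP SA).
  by case: ifP => // _; rewrite inE.
rewrite cardsE card_family foldrE big_map big_enum /= (bigID (mem T)) /=.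
rewrite (eq_bigr (fun _ => #|S|)) => [|b bT]; last by rewrite /F bT.
rewrite prod_nat_const (bigID (mem B)) /= [X in (_ * (_ * X))%N]big1; last first.
  by move=> b /andP[bT bB]; rewrite /F (negbTE bT) (negbTE bB) cards1.
rewrite muln1 (eq_bigr (fun _ => #|A|)) => [|b /andP[bT bB]]; last first.
  by rewrite /F (negbTE bT) bB.
rewrite (eq_bigl (mem (B :\: T))) => [|b]; last by rewrite !inE andbC.
by rewrite prod_nat_const cardsD (setIidPr TB).
Qed.

Lemma card_wr_base : #|wr_base| = (#|A| ^ #|B|)%N.
Proof.
have := card_wr_base_on (sub0set B) (sub0set A); rewrite !cards0 expn0 mul1n subn0 => <-.
apply: eq_card => f; rewrite !inE; apply/esym/andb_idr => _.
by apply/forall_inP => t; rewrite inE.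
Qed.

Section CycleTransversal.
Variable x : hT.
Hypothesis xB : x \in B.

Definition cycle_transversal := transversal (rcosets <[x]> B) B.
Local Notation T := cycle_transversal.

Let sub_xB : <[x]> \subset B. Proof. by rewrite cycle_subG. Qed.
Let trT : is_transversal T (rcosets <[x]> B) B.
Proof. exact/transversalP/rcosets_partition. Qed.

Lemma cycle_transversal_sub : T \subset B.
Proof. exact: transversal_sub trT. Qed.

Lemma card_cycle_transversal : #|T| = (#|B| %/ #[x])%N.
Proof. by rewrite (card_transversal trT) divgS. Qed.

Lemma cycle_transversal_cover b : b \in B -> exists2 t, t \in T & b \in <[x]> :* t.
Proof.
move=> bB; have xb : <[x]> :* b \in rcosets <[x]> B by rewrite mem_rcosets mulSGid.
exists (transversal_repr 1 T (<[x]> :* b)); first exact: (repr_mem_transversal trT 1 xb).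
by rewrite (rcoset_eqP (repr_mem_pblock trT 1 xb)) rcoset_refl.
Qed.

Lemma cycle_transversal_uniq t a : t \in T -> a \in <[x]> -> a * t \in T -> a = 1.
Proof.
move=> tT ax atT; apply: (mulIg t); rewrite mul1g.
have [_ tiP _] := and3P (rcosets_partition sub_xB).
have pblockE u : u \in T -> pblock (rcosets <[x]> B) u = <[x]> :* u.
  move=> uT; have uB := subsetP cycle_transversal_sub u uT.
  have xu : <[x]> :* u \in rcosets <[x]> B by rewrite mem_rcosets mulSGid.
  exact: def_pblock tiP xu (rcoset_refl _ u).
apply: (pblock_inj trT) => //; rewrite !pblockE //.
by apply/rcoset_eqP/rcosetP; exists a.
Qed.

Definition pow_on_transversal (f : {ffun hT -> gT}) : {ffun hT -> gT} :=
  [ffun b => if b \in T then wr_base_pow f x #[x] b else f b].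

Lemma pow_on_transversal_inj : injective pow_on_transversal.
Proof.
move=> f1 f2 /ffunP f12; apply/ffunP => b.
have f12_out c : c \notin T -> f1 c = f2 c.
  by move=> cT; have := f12 c; rewrite !ffunE (negbTE cT).
have [bT|] := boolP (b \in T); last exact: f12_out.
have := f12 b; rewrite !ffunE bT.
have := order_gt0 x; case: #[x] (expg_order x) (@order_dvdn _ x) => [//|m] xm xdvd _.
have off (i : 'I_m) : (x ^+ bump 0 i)^-1 * b \notin T.
  apply/negP => /(cycle_transversal_uniq bT (groupVr (mem_cycle x _)))/eqP.
  rewrite invg_eq1 -xdvd /bump /= add1n => /dvdn_leq.
  by move/(_ isT); rewrite ltnS leqNgt ltn_ord.
rewrite !big_ord_recl /= expg0 invg1 !mul1g.
by rewrite (eq_bigr _ (fun i _ => f12_out _ (off i))) => /mulIg.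
Qed.

Lemma pow_on_transversal_in f : f \in wr_base -> pow_on_transversal f \in wr_base.
Proof.
move=> fK; rewrite inE; apply/forallP => b; rewrite ffunE.
have [bT|bT] := boolP (b \in T); last by move: fK; rewrite inE => /forallP/(_ b).
have bB := subsetP cycle_transversal_sub b bT.
by rewrite bB wr_base_pow_in.
Qed.

Lemma pow_on_transversal_im : pow_on_transversal @: wr_base = wr_base.
Proof.
apply/eqP; rewrite eqEcard card_imset ?leqnn ?andbT; last exact: pow_on_transversal_inj.
by apply/subsetP => _ /imsetP[f fK ->]; apply: pow_on_transversal_in.
Qed.

Lemma wr_base_pow_expg_eq1 f n : f \in wr_base ->
  [forall b, wr_base_pow f x #[x] b ^+ n == 1] =
  [forall t in T, pow_on_transversal f t ^+ n == 1].
Proof.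
move=> fK; apply/forallP/forall_inP => [gn1 t tT|gn1 b]; first by rewrite ffunE tT.
have [bB|bB] := boolP (b \in B); last by rewrite wr_base_pow_out // expg1n.
have [t tT /rcosetP[_ /cycleP[j ->] ->]] := cycle_transversal_cover bB.
have := gn1 t tT; rewrite ffunE tT => gtn1.
elim: j => [|j IHj]; first by rewrite mul1g.
by rewrite expgS -mulgA wr_base_pow_mull -conjXg conjg_eq1.
Qed.

Lemma card_wr_base_pow_expg_eq1 n :
  #|[set f in wr_base | [forall b, wr_base_pow f x #[x] b ^+ n == 1]]| =
  (s_count A n ^ (#|B| %/ #[x]) * #|A| ^ (#|B| - #|B| %/ #[x]))%N.
Proof.
set S := [set g in A | g ^+ n == 1].
have SA : S \subset A by apply/subsetP => g /[!inE] /andP[].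
have inS h : h \in wr_base ->
    [forall t in T, h t \in S] = [forall t in T, h t ^+ n == 1].
  rewrite inE => /forallP hK; apply: eq_forallb_in => t tT.
  by have := hK t; rewrite inE (subsetP cycle_transversal_sub t tT) => ->.
rewrite -card_cycle_transversal -(card_wr_base_on cycle_transversal_sub SA).
rewrite -(card_imset _ pow_on_transversal_inj); apply: eq_card => h.
apply/imsetP/idP => [[f]|].
  rewrite inE => /andP[fK fn1] ->.
  by rewrite inE pow_on_transversal_in // inS ?pow_on_transversal_in // -wr_base_pow_expg_eq1.
rewrite inE => /andP[hK]; rewrite inS //.
move: hK; rewrite -{1}pow_on_transversal_im => /imsetP[f fK ->] fn1.
by exists f; rewrite // inE fK wr_base_pow_expg_eq1.
Qed.
End CycleTransversal.
End WreathProduct.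

Section WreathOrderApprox.
Variables (gT hT : finGroupType) (A : {group gT}) (B : {group hT}).
Variables (R : realFieldType) (p e : nat).
Hypothesis p_pr : prime p.
Hypothesis expA : forall g, g \in A -> (g ^+ (p ^ e.+1) = 1)%g.
Local Open Scope ring_scope.

Local Notation W := (wreath_type gT hT).
Local Notation K := (wr_base A B).
Local Notation P := ((p ^ e.+1)%:R : R).
Local Notation q := ((p ^ e)%:R : R).
Local Notation t := ((s_count A (p ^ e))%:R / #|A|%:R : R).
Local Notation low_order f x := ([forall b, wr_base_pow f x #[x] b ^+ (p ^ e) == 1]%g : nat).

Lemma order_wr_approx f x : f \in K -> x \in B ->
  `|#[(f, x) : W]%g%:R - #[x]%g%:R * (P - (p%:R - 1) * q * (low_order f x)%:R)|
    <= #[x]%g%:R * q.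
Proof.
move=> fK xB; have z1 : (((wr_base_pow f x #[x], 1) : W) ^+ (p ^ e.+1) = 1)%g.
  apply/eqP; rewrite wr_expg1_eq1; apply/forallP => b.
  have [bB|bB] := boolP (b \in B); first by rewrite expA // (wr_base_pow_in _ fK xB bB).
  by rewrite (wr_base_pow_out _ fK xB bB) expg1n.
rewrite (order_wr f x) natrM -mulrBr normrM ger0_norm // ler_wpM2l //.
by rewrite -wr_expg1_eq1; apply: order_pexpS_approx.
Qed.

Lemma sum_wr_base_low_order x : x \in B ->
  \sum_(f in K) (low_order f x)%:R = #|K|%:R * t ^+ (#|B| %/ #[x]%g).
Proof.
move=> xB; have A0 : #|A|%:R != 0 :> R by rewrite pnatr_eq0 -lt0n cardG_gt0.
rewrite sumr_nat_of_bool card_wr_base_pow_expg_eq1 // card_wr_base.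
set r := (#|B| %/ #[x]%g)%N; have rB : (r <= #|B|)%N by apply: leq_div.
rewrite !natrM !natrX -[in #|A|%:R ^+ #|B|](subnK rB) exprD expr_div_n.
by field; rewrite expf_neq0.
Qed.

Lemma avg_order_wreath_approx :
  `|avg_order R (wreath A B) - (P * avg_order R B
      - (p%:R - 1) * q * \sum_(x in B) #[x]%g%:R / #|B|%:R * t ^+ (#|B| %/ #[x]%g))|
    <= q * avg_order R B.
Proof.
have nK0 : #|K|%:R != 0 :> R by rewrite pnatr_eq0 -lt0n card_wr_base expn_gt0 cardG_gt0.
have nB0 : #|B|%:R != 0 :> R by rewrite pnatr_eq0 -lt0n cardG_gt0.
pose E (f : {ffun hT -> gT}) (x : hT) := #[x]%g%:R * (P - (p%:R - 1) * q * (low_order f x)%:R).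
have -> : P * avg_order R B - (p%:R - 1) * q *
    \sum_(x in B) #[x]%g%:R / #|B|%:R * t ^+ (#|B| %/ #[x]%g) =
    (\sum_(x in B) \sum_(f in K) E f x) / (#|K|%:R * #|B|%:R).
  rewrite /avg_order mulr_suml mulr_sumr [X in _ - X]mulr_sumr -sumrB mulr_suml.
  apply: eq_bigr => x xB; rewrite /E -mulr_sumr sumrB sumr_const -mulr_sumr.
  by rewrite sum_wr_base_low_order // -mulr_natr; field; apply/andP.
have err : `|\sum_(x in B) \sum_(f in K) (#[(f, x) : W]%g%:R - E f x)|
    <= \sum_(x in B) \sum_(f in K) #[x]%g%:R * q.
  apply: le_trans (ler_norm_sum _ _ _) _; apply: ler_sum => x xB.
  apply: le_trans (ler_norm_sum _ _ _) _; apply: ler_sum => f fK.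
  exact: order_wr_approx.
have -> : q * avg_order R B =
    (\sum_(x in B) \sum_(f in K) #[x]%g%:R * q) / (#|K|%:R * #|B|%:R).
  under eq_bigr do rewrite sumr_const -(mulr_natr _ #|K|).
  by rewrite /avg_order -!mulr_suml; field; apply/andP.
rewrite /avg_order sum_wreath card_wreath natrM -mulrBl -sumrB.
under eq_bigr do rewrite -sumrB.
rewrite normrM [X in _ * X]ger0_norm ?invr_ge0 ?mulr_ge0 //.
by apply: ler_wpM2r; rewrite ?invr_ge0 ?mulr_ge0.
Qed.
End WreathOrderApprox.

Local Open Scope ring_scope.

Lemma sum_order_classes (R : numFieldType) (hT : finGroupType) (B : {group hT}) p b
    (G : nat -> R) : prime p -> #|B| = (p ^ b)%N ->
  \sum_(0 <= n < b.+1) ((p ^ n)%:R)^-1 * (d_count B (p ^ (b - n)))%:R * G (p ^ n)%N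
  = \sum_(x in B) #[x]%g%:R / #|B|%:R * G (#|B| %/ #[x]%g)%N.
Proof.
move=> p_pr cB; have p_gt0 := prime_gt0 p_pr.
under eq_bigr do rewrite /d_count -sumr_nat_of_bool mulr_sumr mulr_suml.
rewrite exchange_big /=; apply: eq_bigr => x xB.
have /(dvdn_pfactor _ _ p_pr)[k k_le_b ->] : (#[x]%g %| p ^ b)%N by rewrite -cB order_dvdG.
rewrite cB -expnB // (bigD1_seq (b - k)%N) /=; last 2 first.
- by rewrite mem_index_iota; lia.
- by rewrite iota_uniq mem_iota.
rewrite big1_seq ?addr0 => [|n /andP[n_neq]]; last first.
  rewrite mem_index_iota eqn_exp2l ?prime_gt1 // => n_le_b.
  rewrite (_ : (k == b - n)%N = false) ?mulr0 ?mul0r //.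
  by apply/negbTE; apply: contra n_neq => /eqP ->; apply/eqP; lia.
rewrite subKn // eqxx mulr1 -[in (p ^ b)%N](subnK k_le_b) expnD natrM.
by field; rewrite !pnatr_eq0 -!lt0n !expn_gt0 p_gt0.
Qed.

Lemma avg_order_gt0 (R : numFieldType) (gT : finGroupType) (G : {group gT}) :
  0 < avg_order R G.
Proof.
rewrite divr_gt0 ?ltr0n ?cardG_gt0 // (bigD1 1%g) //= ltr_pwDl ?sumr_ge0 //.
by rewrite ltr0n order_gt0.
Qed.

Lemma expg_max_order (gT : finGroupType) (A : {group gT}) p a d : prime p ->
  #|A| = (p ^ a)%N -> (\max_(g in A) #[g]%g)%N = (p ^ d)%N ->
  forall g, g \in A -> (g ^+ (p ^ d) = 1)%g.
Proof.
move=> p_pr cA mA g gA; apply/eqP; rewrite -order_dvdn.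
have : (#[g]%g <= p ^ d)%N by rewrite -mA (leq_bigmax_cond _ gA).
have /(dvdn_pfactor _ _ p_pr)[k _ ->] : (#[g]%g %| p ^ a)%N by rewrite -cA order_dvdG.
by rewrite leq_exp2l ?prime_gt1 // => /dvdn_exp2l.
Qed.

Lemma max_order_gt1 (gT : finGroupType) (A : {group gT}) p a : prime p ->
  #|A| = (p ^ a)%N -> (0 < a)%N -> (1 < \max_(g in A) #[g]%g)%N.
Proof.
move=> p_pr cA a_gt0; have [g gA og] : {g | g \in A & #[g]%g = p}.
  by apply: Cauchy; rewrite // cA dvdn_exp // a_gt0.
by rewrite (leq_trans _ (leq_bigmax_cond _ gA)) // og prime_gt1.
Qed.

Theorem theorem4 (R : realType) :
  exists C : R, 0 < C /\
  forall (p : nat) (gT hT : finGroupType) (A : {group gT}) (B : {group hT})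
         (a b d : nat),
    prime p -> (#|A| = p ^ a)%N -> (#|B| = p ^ b)%N -> (1 <= a)%N -> (1 <= b)%N ->
    (\max_(g in A) #[g]%g)%N = (p ^ d)%N ->
    let aB : R := avg_order R B in
    let k := fun n : nat =>
      ((p ^ n)%:R)^-1 * (d_count B (p ^ (b - n)))%:R / aB in
    `| avg_order R (wreath A B)
       - ((p ^ d)%:R * aB
          - (p%:R - 1) * aB *
            \sum_(0 <= n < b.+1)
               k n * (p ^ d.-1)%:R
                   * ((s_count A (p ^ d.-1))%:R / (p ^ a)%:R) ^+ (p ^ n)) |
    <= C * (p ^ d.-1)%:R * aB.
Proof.
exists 1; split=> // p gT hT A B a b d p_pr cA cB a_gt0 _ mA /=.
have [e de] : exists e, d = e.+1.
  exists d.-1; rewrite prednK // -(ltn_exp2l _ _ (prime_gt1 p_pr)) -mA.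
  exact: max_order_gt1 cA a_gt0.
rewrite de in mA *; rewrite /= mul1r -cA -mulrA.
set t := (s_count A _)%:R / _; set aB := avg_order R B.
have aB_neq0 : aB != 0 by rewrite gt_eqF ?avg_order_gt0.
have -> : aB * \sum_(0 <= n < b.+1) (p ^ n)%:R^-1 * (d_count B (p ^ (b - n)))%:R / aB
            * (p ^ e)%:R * t ^+ (p ^ n) =
          (p ^ e)%:R * \sum_(x in B) #[x]%g%:R / #|B|%:R * t ^+ (#|B| %/ #[x]%g).
  rewrite -(sum_order_classes (fun r => t ^+ r) p_pr cB) !mulr_sumr.
  apply: eq_bigr => n _; field.
  by rewrite aB_neq0 pnatr_eq0 -lt0n expn_gt0 prime_gt0.
rewrite [(p%:R - 1) * _]mulrA.
exact: (avg_order_wreath_approx B R p_pr (expg_max_order p_pr cA mA)).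
Qed.
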